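(* Let $m,n$ be even positive integers and let $\mathcal{X}_0,\mathcal{X}_1\subseteq\{0,1\}^{2mn}$ be as defined in the context. Let $p$ be a real multilinear polynomial in $2mn$ variables such that $p(x)\neq 0$ for all $x\in\mathcal{X}_1$ and $p(x)=0$ for all $x\in\mathcal{X}_0$. Then $\deg(p)\geq \min(n/2,m/2)+1$.
   Context: For $z\in\{0,1\}^k$ let $w(z)$ denote its Hamming weight. Let $\mathcal{A}_1=\{0^m y : y\in\{0,1\}^m,\ m/2\le w(y)\le m\}$ and $\mathcal{A}_0=\{y0^m : y\in\{0,1\}^m,\ m/2\le w(y)\le m\}$ (subsets of $\{0,1\}^{2m}$). A string $x\in\{0,1\}^{2mn}$ is viewed as $n$ consecutive blocks of $2m$ bits, each block being $x^{(0,i)}x^{(1,i)}$ with $x^{(0,i)},x^{(1,i)}\in\{0,1\}^m$, $i=1,\dots,n$. Define $\mathcal{X}_1=\mathcal{A}_0\times\cdots\times\mathcal{A}_0$ ($n$ factors) and $\mathcal{X}_0=\bigcup\{\mathcal{A}_{y_1}\times\cdots\times\mathcal{A}_{y_n} : y\in\{0,1\}^n,\ w(y)=n/2\}$. A multilinear polynomial is $p(x)=\sum_{S\subseteq[N]}a_S\prod_{i\in S}x_i$ with real $a_S$; its degree is $\max\{|S|: a_S\neq 0\}$. *)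

From HB Require Import structures.
From mathcomp Require Import all_boot all_order all_algebra.
From mathcomp Require Import reals.
Set Implicit Arguments. Unset Strict Implicit. Unset Printing Implicit Defensive.
Import Order.TTheory GRing.Theory Num.Theory.
Local Open Scope ring_scope.

(* A real multilinear polynomial in N variables x_0..x_{N-1}: its coefficient
   family a_S, S ranging over subsets of 'I_N. *)
Definition mlpoly (R : realType) (N : nat) := {ffun {set 'I_N} -> R}.

Definition mleval (R : realType) (N : nat) (p : mlpoly R N) (x : 'I_N -> bool) : R :=
  \sum_(S : {set 'I_N}) p S * \prod_(i in S) (if x i then 1 else 0).

(* degree = max |S| with a_S <> 0 (0 for the zero polynomial) *)
Definition mldeg (R : realType) (N : nat) (p : mlpoly R N) : nat :=
  \max_(S : {set 'I_N} | p S != 0%R) #|S|%N.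

Definition bitn (N : nat) (x : 'I_N -> bool) (k : nat) : bool :=
  [exists i : 'I_N, (val i == k) && x i].

(* Blocks i = 0..n-1 (paper's i = 1..n) of 2m bits: block i is
   x^(0,i) x^(1,i); x^(0,i)_j = bit 2mi+j, x^(1,i)_j = bit 2mi+m+j (j<m). *)
Definition w0 (m N : nat) (x : 'I_N -> bool) (i : nat) : nat :=
  (\sum_(j < m) bitn x (2 * m * i + j))%N.
Definition w1 (m N : nat) (x : 'I_N -> bool) (i : nat) : nat :=
  (\sum_(j < m) bitn x (2 * m * i + m + j))%N.

(* block i of x lies in A_b :
   A_1 = {0^m y : m/2 <= w(y) <= m},  A_0 = {y 0^m : m/2 <= w(y) <= m}. *)
Definition inA (m N : nat) (b : bool) (x : 'I_N -> bool) (i : nat) : bool :=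
  if b then ((w0 m x i == 0) && (m <= 2 * w1 m x i) && (w1 m x i <= m))%N
  else ((w1 m x i == 0) && (m <= 2 * w0 m x i) && (w0 m x i <= m))%N.

Definition inX1 (m n : nat) (x : 'I_(2 * m * n) -> bool) : Prop :=
  forall i : 'I_n, inA m false x i.

Definition inX0 (m n : nat) (x : 'I_(2 * m * n) -> bool) : Prop :=
  exists y : 'I_n -> bool,
    (2 * #|[set i : 'I_n | y i]|)%N = n /\ forall i : 'I_n, inA m (y i) x i.
Arguments inX1 : clear implicits.
Arguments inX0 : clear implicits.

From mathcomp Require Import all_boot all_order all_algebra.
From mathcomp Require Import reals.
From mathcomp Require Import zify.
Set Implicit Arguments. Unset Strict Implicit. Unset Printing Implicit Defensive.
Import Order.TTheory GRing.Theory Num.Theory.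

(* If [deg p < |A|], every monomial of [p] misses some position [t] of [A], so
   the signed sum of [p] over all ways of overwriting a subset of [A] with a
   fixed bit cancels in pairs [B], [B xor {t}].  Hence [p] vanishes at [x] as
   soon as it vanishes at every point obtained by overwriting a nonempty set of
   positions where [x] differs from that bit, which sets up a descent.
   Turning zeros into ones, [p] vanishes at every point supported on the halves
   x^(y_i, i) of a balanced [y]: the descent stops in X_0 once at most m/2 zeros
   remain there.  Turning ones into zeros, [p] vanishes at every point supported
   on the halves x^(0, i): the descent stops once at most n/2 blocks are nonzero,
   and then a balanced [y] avoiding them reduces to the previous case.  The
   point of X_1 that is all ones on these halves contradicts [p <> 0] on X_1. *)

Section SignedSums.
Local Open Scope ring_scope.

Lemma sum_signed_subsets_eq0 (R : numDomainType) (T : finType) (A : {set T})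
    (t : T) (F : {set T} -> R) :
  t \in A -> (forall B, F (B :\ t) = F B) ->
  \sum_(B : {set T} | B \subset A) (-1) ^+ #|B| * F B = 0.
Proof.
move=> tA Ft.
pose tog (B : {set T}) := if t \in B then B :\ t else t |: B.
have togK : involutive tog.
  move=> B; rewrite /tog; case: (boolP (t \in B)) => tB.
    by rewrite setD11 setD1K.
  by rewrite setU11 setU1K.
have subA_tog B : (tog B \subset A) = (B \subset A).
  rewrite /tog; case: (boolP (t \in B)) => tB.
    by rewrite subDset (setUidPr _) // sub1set.
  by rewrite subUset sub1set tA.
have sign_tog B : (-1) ^+ #|tog B| * F (tog B) = - ((-1) ^+ #|B| * F B) :> R.
  rewrite /tog; case: (boolP (t \in B)) => tB.
    by rewrite Ft (cardsD1 t B) tB add1n exprS mulN1r mulNr opprK.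
  by rewrite -[F (t |: B)]Ft setU1K // cardsU1 tB add1n exprS mulN1r mulNr.
set S := \sum_(B | _) _.
have : S = \sum_(B : {set T} | B \subset A) - ((-1) ^+ #|B| * F B).
  rewrite /S (reindex_inj (inv_inj togK)).
  by apply: eq_big => [B | B _]; rewrite ?subA_tog ?sign_tog.
by rewrite sumrN => /eqP; rewrite -subr_eq0 opprK -mulr2n mulrn_eq0 => /eqP.
Qed.

End SignedSums.

Definition setbits (N : nat) (x : 'I_N -> bool) (B : {set 'I_N}) (v : bool) :
    'I_N -> bool :=
  fun k => if k \in B then v else x k.

Section MultilinearFlips.
Variables (R : realType) (N : nat) (p : mlpoly R N).
Local Open Scope ring_scope.

Lemma eq_mleval (x x' : 'I_N -> bool) : x =1 x' -> mleval p x = mleval p x'.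
Proof.
by move=> xx'; apply: eq_bigr => S _; congr (_ * _); apply: eq_bigr => k _; rewrite xx'.
Qed.

Lemma sum_signed_setbits_eq0 (x : 'I_N -> bool) (A : {set 'I_N}) (v : bool) :
  (mldeg p < #|A|)%N ->
  \sum_(B : {set 'I_N} | B \subset A) (-1) ^+ #|B| * mleval p (setbits x B v) = 0.
Proof.
move=> degA; rewrite /mleval.
under eq_bigr => B _ do rewrite big_distrr /=.
rewrite exchange_big /=; apply: big1 => S _.
have [->|pS] := eqVneq (p S) 0.
  by apply: big1 => B _; rewrite mul0r mulr0.
have /subsetPn [t tA tS] : ~~ (A \subset S).
  apply: contraTN degA => /subset_leq_card AS; rewrite -leqNgt.
  apply: leq_trans AS _; rewrite /mldeg; exact: leq_bigmax_cond.
apply: (sum_signed_subsets_eq0 (t := t)) => // B.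
congr (_ * _); apply: eq_bigr => k kS; rewrite /setbits !inE.
by rewrite (_ : (k != t) = true) //; apply: contraNneq tS => <-.
Qed.

Lemma mleval_eq0_of_setbits (x : 'I_N -> bool) (A : {set 'I_N}) (v : bool) :
  (mldeg p < #|A|)%N ->
  (forall B : {set 'I_N}, B \subset A -> B != set0 -> mleval p (setbits x B v) = 0) ->
  mleval p x = 0.
Proof.
move=> degA p0; have := sum_signed_setbits_eq0 x v degA.
rewrite (bigD1 set0) ?sub0set //= big1 ?addr0 => [|B /andP[BA B0]]; last first.
  by rewrite p0 ?mulr0.
rewrite cards0 expr0 mul1r => <-; apply: eq_mleval => k.
by rewrite /setbits inE.
Qed.

Lemma mleval_eq0_descent (U : {set 'I_N}) (v : bool)
    (Q : ('I_N -> bool) -> Prop) :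
  (forall x (B : {set 'I_N}), Q x -> B \subset U -> Q (setbits x B v)) ->
  (forall x, Q x -> (#|[set k in U | x k != v]| <= mldeg p)%N -> mleval p x = 0) ->
  forall x, Q x -> mleval p x = 0.
Proof.
move=> QU base x; have [K] := ubnP #|[set k in U | x k != v]|.
elim: K x => // K IH x; rewrite ltnS => leK Qx.
set A := [set k in U | x k != v].
have [/(base x Qx)//|degA] := leqP #|A| (mldeg p).
apply: (mleval_eq0_of_setbits (v := v) degA) => B BA B0; apply: IH.
  have -> : [set k in U | setbits x B v k != v] = A :\: B.
    by apply/setP => k; rewrite !inE /setbits; case: (k \in B); rewrite ?eqxx ?andbF.
  rewrite cardsD (setIidPr BA); have := subset_leq_card BA.
  by move: leK B0; rewrite -/A -card_gt0; lia.
by apply: QU => //; apply: subset_trans BA _; apply/subsetP => k; rewrite inE => /andP[].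
Qed.

End MultilinearFlips.

Lemma sum_bitn_card (N m : nat) (x : 'I_N -> bool) (hb : nat) : 0 < m ->
  \sum_(j < m) bitn x (hb * m + j) = #|[set k : 'I_N | (k %/ m == hb) && x k]|.
Proof.
move=> m_gt0; set S := [set k : 'I_N | _].
pose res (k : 'I_N) : 'I_m := Ordinal (ltn_pmod k m_gt0).
have resK : {in S, forall k, hb * m + res k = k :> nat}.
  by move=> k; rewrite inE => /andP[/eqP <- _] /=; rewrite -divn_eq.
rewrite -(card_in_imset (f := res)); last first.
  by move=> k k' kS k'S ekk'; apply/val_inj => /=; rewrite -(resK k) // -(resK k') // ekk'.
rewrite -sum1_card [RHS]big_mkcond /=; apply: eq_bigr => j _.
have -> : (j \in res @: S) = bitn x (hb * m + j).
  apply/imsetP/existsP => [[k kS ->]|[k /andP[/eqP ek xk]]].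
    by exists k; rewrite resK // eqxx; move: kS; rewrite inE => /andP[].
  exists k; last by apply/val_inj; rewrite /= ek modnMDl modn_small.
  by rewrite inE xk andbT /= ek divnMDl // divn_small ?addn0.
by case: bitn.
Qed.

Section Blocks.
Variables m n : nat.
Hypothesis m_gt0 : 0 < m.
Local Notation N := (2 * m * n).

(* Half-block [2 i] is x^(0, i) and half-block [2 i + 1] is x^(1, i). *)
Definition hblock (hb : nat) : {set 'I_N} := [set k : 'I_N | k %/ m == hb].

Definition hweight (x : 'I_N -> bool) (hb : nat) : nat := #|[set k in hblock hb | x k]|.

Lemma hweightE x hb : hweight x hb = \sum_(j < m) bitn x (hb * m + j).
Proof.
by rewrite (sum_bitn_card _ _ m_gt0); apply: eq_card => k; rewrite !inE.
Qed.

Lemma w0E x i : w0 m x i = hweight x (2 * i).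
Proof. by rewrite hweightE /w0 (mulnAC 2 i m). Qed.

Lemma w1E x i : w1 m x i = hweight x (2 * i + 1).
Proof. by rewrite hweightE /w1 mulnDl mul1n (mulnAC 2 i m). Qed.

Lemma card_hblock hb : hb < 2 * n -> #|hblock hb| = m.
Proof.
move=> hb_lt; have := hweightE xpredT hb; rewrite /hweight.
have -> : [set k in hblock hb | xpredT k] = hblock hb by apply/setP => k; rewrite inE andbT.
move=> ->; rewrite (eq_bigr (fun=> 1)) ?sum1_card ?card_ord // => j _.
have lt_k : hb * m + j < N by have := ltn_ord j; nia.
suff -> : @bitn N xpredT (hb * m + j) by [].
by apply/existsP; exists (Ordinal lt_k); rewrite /= eqxx.
Qed.

Lemma hweight_le x hb : hb < 2 * n -> hweight x hb <= m.
Proof.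
move=> hb_lt; rewrite -[X in _ <= X](card_hblock hb_lt); apply: subset_leq_card.
by apply/subsetP => k; rewrite inE => /andP[].
Qed.

Lemma hweight_zeros x hb :
  hb < 2 * n -> hweight x hb + #|[set k in hblock hb | ~~ x k]| = m.
Proof.
move=> hb_lt; rewrite -[RHS](card_hblock hb_lt) -(cardsID [set k | x k] (hblock hb)).
by rewrite /hweight; congr (_ + _); apply: eq_card => k; rewrite !inE // andbC.
Qed.

Lemma hweight_eq0 x hb : (hweight x hb == 0) = [forall k in hblock hb, ~~ x k].
Proof.
rewrite /hweight cards_eq0; apply/eqP/forall_inP => [A0 k kH | H].
  by apply/negP => xk; have := in_set0 k; rewrite -A0 inE kH xk.
by apply/setP => k; rewrite inE in_set0; apply/andP => -[kH xk]; move: (H k kH); rewrite xk.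
Qed.

Lemma blk_subproof (k : 'I_N) : (k %/ m)./2 < n.
Proof. by rewrite -divn2 -divnMA ltn_divLR ?muln_gt0 ?m_gt0 //; have := ltn_ord k; lia. Qed.

Definition blk (k : 'I_N) : 'I_n := Ordinal (blk_subproof k).

Lemma mem_hblock (k : 'I_N) (i : 'I_n) (b : bool) :
  (k \in hblock (2 * i + b)) = (blk k == i) && (odd (k %/ m) == b).
Proof.
rewrite inE -val_eqE /= -[in LHS](odd_double_half (k %/ m)).
by case: (odd _) b => [] []; apply/eqP/andP; case; lia.
Qed.

(* The union of the halves x^(y_i, i), outside of which every point of
   A_{y_1} x ... x A_{y_n} vanishes. *)
Definition selected (y : 'I_n -> bool) : {set 'I_N} := [set k : 'I_N | odd (k %/ m) == y (blk k)].

Lemma inAE b x (i : 'I_n) :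
  inA m b x i = [forall k in hblock (2 * i + ~~ b), ~~ x k] && (m <= 2 * hweight x (2 * i + b)).
Proof.
have lt_i : 2 * i + 1 < 2 * n by have := ltn_ord i; lia.
rewrite /inA w0E w1E; case: b; rewrite /= ?addn0 -hweight_eq0.
  by rewrite hweight_le ?andbT.
by rewrite hweight_le ?andbT //; lia.
Qed.

End Blocks.

Section LowerBound.
Variables (R : realType) (m n : nat).
Hypothesis m_gt0 : 0 < m.
Local Notation N := (2 * m * n).
Local Notation blk := (blk m_gt0).
Local Notation selected := (selected m_gt0).
Variable p : mlpoly R N.
Hypothesis p_X0 : forall x, inX0 m n x -> mleval p x = 0%R.

Lemma mleval_eq0_selected (y : 'I_n -> bool) :
  2 * #|[set i | y i]| = n -> mldeg p <= m./2 ->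
  forall x : 'I_N -> bool, [set k | x k] \subset selected y -> mleval p x = 0%R.
Proof.
move=> y_half deg_le.
apply: (mleval_eq0_descent (U := selected y) (v := true)
  (Q := fun x : 'I_N -> bool => [set k | x k] \subset selected y))
  => [x B /subsetP x_y /subsetP B_y | x /subsetP x_y few0].
  by apply/subsetP => k; rewrite inE /setbits; case: ifP => [/B_y | _ xk] //; apply: x_y; rewrite inE.
apply: p_X0; exists y; split => // i; rewrite (inAE m_gt0); apply/andP; split.
  apply/forall_inP => k; rewrite (mem_hblock m_gt0) => /andP[/eqP<- /eqP odd_k].
  have : k \notin selected y by rewrite inE odd_k; case: (y _).
  by apply: contra => xk; apply: x_y; rewrite inE.
have lt_i : 2 * i + y i < 2 * n by have := ltn_ord i; case: (y i); lia.
have zeros_le : #|[set k in hblock m n (2 * i + y i) | ~~ x k]| <= m./2.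
  apply: leq_trans (leq_trans _ few0) deg_le; apply: subset_leq_card.
  apply/subsetP => k /setIdP[]; rewrite (mem_hblock m_gt0) => /andP[/eqP<- odd_k] xk.
  by rewrite !inE odd_k (negbTE xk).
have := hweight_zeros m_gt0 x lt_i; have := odd_double_half m; lia.
Qed.

Lemma mleval_eq0_even : ~~ odd n -> mldeg p <= minn n./2 m./2 ->
  forall x : 'I_N -> bool, [set k | x k] \subset selected (fun=> false) -> mleval p x = 0%R.
Proof.
move=> n_even deg_le.
apply: (mleval_eq0_descent (U := setT) (v := false)
  (Q := fun x : 'I_N -> bool => [set k | x k] \subset selected (fun=> false)))
  => [x B /subsetP x_even _ | x /subsetP x_even few1].
  by apply/subsetP => k; rewrite inE /setbits; case: ifP => // _ xk; apply: x_even; rewrite inE.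
pose busy := blk @: [set k | x k].
have busy_le : #|busy| <= n./2.
  apply: leq_trans (leq_imset_card _ _) (leq_trans _ (leq_trans deg_le (geq_minl _ _))).
  by apply: leq_trans _ few1; apply: subset_leq_card; apply/subsetP => k; rewrite !inE; case: (x k).
have : n./2 <= #|~: busy|.
  by have := cardsC busy; rewrite card_ord; have := odd_double_half n; lia.
case/card_geqP => s [s_uniq s_size s_idle].
apply: (mleval_eq0_selected (y := fun i => i \in s)).
- rewrite cardsE (card_uniqP s_uniq) s_size.
  by have := odd_double_half n; rewrite (negbTE n_even); lia.
- exact: leq_trans deg_le (geq_minr _ _).
apply/subsetP => k xk; have := x_even k xk; rewrite !inE => /eqP->.
have blk_busy : blk k \in busy by apply: imset_f.
by rewrite eq_sym eqbF_neg; apply/negP => /s_idle; rewrite inE blk_busy.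
Qed.

End LowerBound.

Theorem lemma2 (R : realType) (m n : nat)
  (hm : (0 < m)%N) (hme : ~~ odd m) (hn : (0 < n)%N) (hne : ~~ odd n)
  (p : mlpoly R (2 * m * n))
  (h1 : forall x, inX1 m n x -> mleval p x <> 0%R)
  (h0 : forall x, inX0 m n x -> mleval p x = 0%R) :
  ((minn n./2 m./2).+1 <= mldeg p)%N.
Proof.
rewrite ltnNge; apply/negP => deg_le.
pose x1 (k : 'I_(2 * m * n)) := k \in selected hm (fun=> false).
apply: (h1 x1); last by apply: (mleval_eq0_even h0 hne deg_le); apply/subsetP => k; rewrite inE.
move=> i; rewrite (inAE hm); apply/andP; split.
  by apply/forall_inP => k; rewrite (mem_hblock hm) /x1 inE => /andP[_ /eqP->].
have lt_i : 2 * i + false < 2 * n by have := ltn_ord i; lia.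
suff -> : hweight x1 (2 * i + false) = m by lia.
rewrite -[RHS](card_hblock hm lt_i); apply: eq_card => k.
by rewrite inE; apply: andb_idr; rewrite (mem_hblock hm) /x1 inE => /andP[_ /eqP->].
Qed.
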